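(* Let $D$ and $D'=D+A$ be generalized connections on $E$, with $A\in \Gamma (E^*\otimes \mathfrak{so}(E))$, and let $D^S$ be an $E$-connection on $S$ compatible with $D$. Then: (i) The torsions $T'$ and $T$ of $D'$ and $D$ are related by $T'= T + \alpha$, where $\alpha \in \Gamma (\wedge^3E^* )$ is given by $\alpha (u,v,w) = \sum_{(u,v,w)\; \mathrm{cyclic}} \langle A_uv,w\rangle$. (ii) The $E$-connection $(D^S)' := D^S -\frac12 A$ is compatible with $D'$. Here $A$ is considered as a map $E\rightarrow \wedge^2E^*\cong \wedge ^2E\subset \mathrm{Cl}(E)$, so that $A_e$ acts by Clifford multiplication on $S$ for all $e\in E$. (iii) The Dirac operators $D\!\!\!\!/^{\,S}$ and $(D\!\!\!\!/^{\,S})'$ associated with $(D,D^S)$ and $(D',(D^S)')$ are related by $(D\!\!\!\!/^{\,S})' = D\!\!\!\!/^{\,S} - \frac14 \gamma_\alpha -\frac14 \gamma_{v_A}$, where $v_A = \mathrm{tr}_{\langle \cdot ,\cdot \rangle}A= \sum_i A_{e_i}\tilde{e}_i \in \Gamma (E)$. (iv) The operators $d\!\!\!/_{S}= D\!\!\!\!/^{\,S}+\frac{1}{4} \gamma_{T}$ and $d\!\!\!/^{\,\prime}_{S}= (D\!\!\!\!/^{\,S})' +\frac{1}{4} \gamma_{T'}$ are related by $d\!\!\!/^{\,\prime}_{S}= d\!\!\!/_{S} -\frac{1}{4} \gamma_{v_{A}}$.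
   Context: Let $E\to M$ be a regular Courant algebroid (anchor $\pi$ of constant rank, Dorfman bracket $[\cdot,\cdot]$) with scalar product $\langle\cdot,\cdot\rangle$ of neutral signature, and $S$ a bundle of irreducible $\mathrm{Cl}(E)$-modules (Clifford relation $e^2=\langle e,e\rangle$) with action $a\mapsto\gamma_a$. A generalized connection is an $\mathbb R$-linear $D:\Gamma(E)\to\Gamma(E^*\otimes E)$ with $D_e(fv)=\pi(e)(f)v+fD_ev$, compatible with $\langle\cdot,\cdot\rangle$; its torsion $T(u,v,w)=\langle D_uv-D_vu-[u,v]+(Du)^*v,w\rangle$ is a 3-form, identified with an element of $\wedge^3E\subset\mathrm{Cl}(E)$. $E$ is identified with $E^*$ via $\langle\cdot,\cdot\rangle$, and $\wedge^2E\subset\mathrm{End}\,E$ via $(e_1\wedge e_2)(e_3)=\langle e_1,e_3\rangle e_2-\langle e_2,e_3\rangle e_1$. An $E$-connection $D^S$ on $S$ is compatible with $D$ if $D^S_e(as)=(D_ea)s+aD^S_es$. The Dirac operator is $D\!\!\!\!/^{\,S}=\frac12\sum_i\tilde e_iD^S_{e_i}$, with $(e_i)$ a local frame of $E$ and $(\tilde e_i)$ the dual frame, $\langle e_i,\tilde e_j\rangle=\delta_{ij}$. *)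

(* an algebraic (module-of-sections) model of a Courant
   algebroid E -> M and a Clifford-module bundle S -> M. *)
From HB Require Import structures.
From mathcomp Require Import all_boot all_order all_algebra.
From mathcomp Require Import reals.
Set Implicit Arguments.
Unset Strict Implicit.
Unset Printing Implicit Defensive.
Import Order.TTheory GRing.Theory Num.Theory.
Local Open Scope ring_scope.

Section CourantDefs.
Variables (R : realType) (K : comAlgType R) (V S : lmodType K).
(* K  = ring C^oo(M) of smooth real functions (an R-algebra),
   V  = Gamma(E), S = Gamma(S), both K-modules. *)

Definition rK (r : R) : K := r%:A.
Definition coef_half : K := rK (2%:R)^-1.
Definition coef_quarter : K := rK (4%:R)^-1.
Definition coef_sixth : K := rK (6%:R)^-1.

(* vector fields act on functions as R-linear derivations *)
Definition derivation (d : K -> K) : Prop :=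
  [/\ forall x y, d (x + y) = d x + d y,
      forall (r : R) x, d (r *: x) = r *: d x &
      forall x y, d (x * y) = d x * y + x * d y].

Definition anchor_ok (pi : V -> K -> K) : Prop :=
  [/\ forall e, derivation (pi e),
      forall e1 e2 x, pi (e1 + e2) x = pi e1 x + pi e2 x &
      forall (f : K) e x, pi (f *: e) x = f * pi e x].

Definition scalar_product (ip : V -> V -> K) : Prop :=
  [/\ forall u v, ip u v = ip v u,
      forall u1 u2 v, ip (u1 + u2) v = ip u1 v + ip u2 v &
      forall (f : K) u v, ip (f *: u) v = f * ip u v].

Definition courant_algebroid (pi : V -> K -> K) (br : V -> V -> V)
  (ip : V -> V -> K) : Prop :=
  [/\ anchor_ok pi, scalar_product ip,
      forall u1 u2 v, br (u1 + u2) v = br u1 v + br u2 v,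
      forall u v1 v2, br u (v1 + v2) = br u v1 + br u v2 &
      forall u (f : K) v, br u (f *: v) = pi u f *: v + f *: br u v] /\
  [/\ forall u v w, br u (br v w) = br (br u v) w + br v (br u w),
      forall u v w, pi u (ip v w) = ip (br u v) w + ip v (br u w) &
      forall u v w, ip (br u v + br v u) w = pi w (ip u v)].

Definition clifford_module (ip : V -> V -> K) (gamma : V -> S -> S) : Prop :=
  [/\ forall e1 e2 s, gamma (e1 + e2) s = gamma e1 s + gamma e2 s,
      forall (f : K) e s, gamma (f *: e) s = f *: gamma e s,
      forall e s1 s2, gamma e (s1 + s2) = gamma e s1 + gamma e s2,
      forall e (f : K) s, gamma e (f *: s) = f *: gamma e s &
      forall e s, gamma e (gamma e s) = ip e e *: s].

Definition local_frame (ip : V -> V -> K) (n : nat) (e et : 'I_n -> V) : Prop :=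
  (forall v, exists c : 'I_n -> K, v = \sum_(i < n) c i *: e i) /\
  (forall i j, ip (e i) (et j) = (i == j)%:R).

Definition gen_connection (pi : V -> K -> K) (ip : V -> V -> K)
  (D : V -> V -> V) : Prop :=
  [/\ forall u1 u2 v, D (u1 + u2) v = D u1 v + D u2 v,
      forall (f : K) u v, D (f *: u) v = f *: D u v,
      forall u v1 v2, D u (v1 + v2) = D u v1 + D u v2,
      forall u (f : K) v, D u (f *: v) = pi u f *: v + f *: D u v &
      forall u v w, pi u (ip v w) = ip (D u v) w + ip v (D u w)].

Definition so_valued (ip : V -> V -> K) (A : V -> V -> V) : Prop :=
  [/\ forall u1 u2 v, A (u1 + u2) v = A u1 v + A u2 v,
      forall (f : K) u v, A (f *: u) v = f *: A u v,
      forall u v1 v2, A u (v1 + v2) = A u v1 + A u v2,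
      forall u (f : K) v, A u (f *: v) = f *: A u v &
      forall u v w, ip (A u v) w + ip v (A u w) = 0].

(* torsion T(u,v,w) = <D_u v - D_v u - [u,v] + (Du)^* v, w>,
   where <(Du)^* v, w> = <v, D_w u> *)
Definition torsion (br : V -> V -> V) (ip : V -> V -> K) (D : V -> V -> V)
  (u v w : V) : K :=
  ip (D u v - D v u - br u v) w + ip v (D w u).

Definition E_connection (pi : V -> K -> K) (DS : V -> S -> S) : Prop :=
  [/\ forall u1 u2 s, DS (u1 + u2) s = DS u1 s + DS u2 s,
      forall (f : K) u s, DS (f *: u) s = f *: DS u s,
      forall u s1 s2, DS u (s1 + s2) = DS u s1 + DS u s2 &
      forall u (f : K) s, DS u (f *: s) = pi u f *: s + f *: DS u s].

Definition compatible (gamma : V -> S -> S) (D : V -> V -> V)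
  (DS : V -> S -> S) : Prop :=
  forall u a s, DS u (gamma a s) = gamma (D u a) s + gamma a (DS u s).

(* Clifford action of B in so(E) = wedge^2 E subset Cl(E) under
   (e1/\e2)(e3) = <e1,e3>e2 - <e2,e3>e1 and e1/\e2 = (e1 e2 - e2 e1)/2:
   B corresponds to (1/2) sum_i et_i . B(e_i) *)
Definition cl2 (gamma : V -> S -> S) (n : nat) (e et : 'I_n -> V)
  (B : V -> V) (s : S) : S :=
  coef_half *: \sum_(i < n) gamma (et i) (gamma (B (e i)) s).

(* Clifford action of a 3-form a in wedge^3 E^* = wedge^3 E subset Cl(E):
   a = sum_{i<j<k} a(e_i,e_j,e_k) et_i /\ et_j /\ et_k
     = (1/6) sum_{i,j,k} a(e_i,e_j,e_k) et_i et_j et_k *)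
Definition cl3 (gamma : V -> S -> S) (n : nat) (e et : 'I_n -> V)
  (a : V -> V -> V -> K) (s : S) : S :=
  coef_sixth *: \sum_(i < n) \sum_(j < n) \sum_(k < n)
    a (e i) (e j) (e k) *: gamma (et i) (gamma (et j) (gamma (et k) s)).

Definition dirac (gamma : V -> S -> S) (n : nat) (e et : 'I_n -> V)
  (DS : V -> S -> S) (s : S) : S :=
  coef_half *: \sum_(i < n) gamma (et i) (DS (e i) s).

Definition alphaA (ip : V -> V -> K) (A : V -> V -> V) (u v w : V) : K :=
  ip (A u v) w + ip (A v w) u + ip (A w u) v.

Definition traceA (n : nat) (e et : 'I_n -> V) (A : V -> V -> V) : V :=
  \sum_(i < n) A (e i) (et i).

End CourantDefs.

Arguments coef_half {R K}.
Arguments coef_quarter {R K}.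
Arguments coef_sixth {R K}.

From HB Require Import structures.
From mathcomp Require Import all_boot all_order all_algebra.
From mathcomp Require Import reals.
From mathcomp Require Import ring.
Import GRing.Theory Num.Theory.
Local Open Scope ring_scope.

(** The whole argument is C^oo(M)-linear Clifford algebra. Moving [gamma a]
    across two Clifford factors with [x y + y x = 2 <x,y>] gives, for [B] in
    [so(E)], the commutator [[cl2 B, gamma a] = - 2 gamma (B a)]; this is why
    [D^S - (1/2) cl2 A] is compatible with [D + A].  Expanding the three cyclic
    terms of [alpha] in the frame turns them into [Q], [Q - 2 gamma v_A] and
    [Q - 4 gamma v_A], where [Q = sum_i et_i . (2 cl2 (A e_i))] and the trace of
    each skew [A e_i] vanishes; hence [cl3 alpha = Q / 2 - gamma v_A], while the
    Dirac operator changes by [- Q / 8]. *)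

Set Implicit Arguments.
Unset Strict Implicit.

Section ScalarConstants.
Variables (R : realType) (K : comAlgType R).

Lemma rKM (a b : R) : rK K a * rK K b = rK K (a * b).
Proof. by rewrite /rK mulr_algl scalerA. Qed.

Lemma rK_nat m : rK K m%:R = m%:R.
Proof. by rewrite /rK scaler_nat. Qed.

Lemma rK_natV_mul m : m != 0%N -> rK K m%:R^-1 * m%:R = 1.
Proof.
move=> m0; rewrite -rK_nat rKM mulVf; first by rewrite /rK scale1r.
by rewrite pnatr_eq0.
Qed.

Lemma coef_half2 : coef_half * 2%:R = 1 :> K. Proof. exact: rK_natV_mul. Qed.
Lemma coef_quarter4 : coef_quarter * 4%:R = 1 :> K. Proof. exact: rK_natV_mul. Qed.
Lemma coef_sixth6 : coef_sixth * 6%:R = 1 :> K. Proof. exact: rK_natV_mul. Qed.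

Lemma coef_quarterE : coef_quarter = coef_half * coef_half :> K.
Proof. by rewrite /coef_quarter /coef_half rKM -invfM -natrM. Qed.

Lemma coef_sixth3 : coef_sixth * 3%:R = coef_half :> K.
Proof. by rewrite /coef_sixth /coef_half -rK_nat rKM; congr (rK _ _); field. Qed.

End ScalarConstants.

Section CliffordFrame.
Variables (R : realType) (K : comAlgType R) (V S : lmodType K).
Variables (ip : V -> V -> K) (gamma : V -> S -> S) (n : nat) (e et : 'I_n -> V).
Hypotheses (sp : scalar_product ip) (cm : clifford_module ip gamma)
  (fr : local_frame ip e et).

Lemma ipC u v : ip u v = ip v u. Proof. by case: sp. Qed.
Lemma ipDl u1 u2 v : ip (u1 + u2) v = ip u1 v + ip u2 v. Proof. by case: sp. Qed.
Lemma ipZl f u v : ip (f *: u) v = f * ip u v. Proof. by case: sp. Qed.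
Lemma ipDr u v1 v2 : ip u (v1 + v2) = ip u v1 + ip u v2.
Proof. by rewrite ipC ipDl !(ipC u). Qed.
Lemma ipZr f u v : ip u (f *: v) = f * ip u v. Proof. by rewrite ipC ipZl ipC. Qed.
Lemma ip0l v : ip 0 v = 0. Proof. by have := ipZl 0 0 v; rewrite scale0r mul0r. Qed.
Lemma ipNl u v : ip (- u) v = - ip u v. Proof. by rewrite -scaleN1r ipZl mulN1r. Qed.
Lemma ipBl u1 u2 v : ip (u1 - u2) v = ip u1 v - ip u2 v. Proof. by rewrite ipDl ipNl. Qed.

Lemma ip_suml (I : finType) (F : I -> V) v : ip (\sum_i F i) v = \sum_i ip (F i) v.
Proof. by apply: (big_morph (ip^~ v)) => [x y|]; rewrite ?ipDl ?ip0l. Qed.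

Lemma ip_sumr (I : finType) (F : I -> V) v : ip v (\sum_i F i) = \sum_i ip v (F i).
Proof. by rewrite ipC ip_suml; apply: eq_bigr => i _; rewrite ipC. Qed.

Lemma gammaDl x y s : gamma (x + y) s = gamma x s + gamma y s. Proof. by case: cm. Qed.
Lemma gammaZl f x s : gamma (f *: x) s = f *: gamma x s. Proof. by case: cm. Qed.
Lemma gammaDr x s1 s2 : gamma x (s1 + s2) = gamma x s1 + gamma x s2. Proof. by case: cm. Qed.
Lemma gammaZr x f s : gamma x (f *: s) = f *: gamma x s. Proof. by case: cm. Qed.
Lemma gamma_sq x s : gamma x (gamma x s) = ip x x *: s. Proof. by case: cm. Qed.
Lemma gamma0l s : gamma 0 s = 0. Proof. by have := gammaZl 0 0 s; rewrite !scale0r. Qed.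
Lemma gamma0r x : gamma x 0 = 0. Proof. by have := gammaZr x 0 0; rewrite !scale0r. Qed.
Lemma gammaNr x s : gamma x (- s) = - gamma x s.
Proof. by rewrite -scaleN1r gammaZr scaleN1r. Qed.
Lemma gammaBr x s1 s2 : gamma x (s1 - s2) = gamma x s1 - gamma x s2.
Proof. by rewrite gammaDr gammaNr. Qed.

Lemma gamma_suml (I : finType) (F : I -> V) s :
  gamma (\sum_i F i) s = \sum_i gamma (F i) s.
Proof. by apply: (big_morph (gamma^~ s)) => [x y|]; rewrite ?gammaDl ?gamma0l. Qed.

Lemma gamma_sumr (I : finType) (F : I -> S) x :
  gamma x (\sum_i F i) = \sum_i gamma x (F i).
Proof. by apply: (big_morph (gamma x)) => [s1 s2|]; rewrite ?gammaDr ?gamma0r. Qed.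

Lemma gamma_anticomm x y s :
  gamma x (gamma y s) + gamma y (gamma x s) = (2%:R * ip x y) *: s.
Proof.
have := gamma_sq (x + y) s.
rewrite !gammaDl !gammaDr !gamma_sq ipDl !ipDr (ipC y x) !scalerDl.
rewrite -!addrA => /addrI; rewrite addrCA !addrA => /addIr.
by rewrite addrC mulr_natl mulr2n scalerDl.
Qed.

Lemma gamma_swap x y s :
  gamma x (gamma y s) = (2%:R * ip x y) *: s - gamma y (gamma x s).
Proof. by rewrite -gamma_anticomm addrK. Qed.

Lemma gamma_pass2 a x y s :
  gamma a (gamma x (gamma y s)) =
  gamma x (gamma y (gamma a s)) + 2%:R *: (ip a x *: gamma y s - ip a y *: gamma x s).
Proof.
rewrite gamma_swap (gamma_swap a y) gammaBr gammaZr opprB scalerBr !scalerA.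
by rewrite (mulrC _ (ip a x)) (mulrC _ (ip a y)) addrCA addrA.
Qed.

Lemma frame_dual i j : ip (e i) (et j) = (i == j)%:R.
Proof. by case: fr => _ ->. Qed.

Lemma frame_expand x : x = \sum_i ip x (et i) *: e i.
Proof.
case: fr => span _; have [c ->] := span x.
apply: eq_bigr => i _; congr (_ *: _).
rewrite ip_suml (bigD1 i) //= ipZl frame_dual eqxx mulr1 big1 ?addr0 // => j /negbTE ji.
by rewrite ipZl frame_dual ji mulr0.
Qed.

Lemma dual_frame_expand x : x = \sum_i ip x (e i) *: et i.
Proof.
apply/eqP; rewrite -subr_eq0; apply/eqP; set y := _ - _.
have y_e j : ip y (e j) = 0.
  rewrite ipBl ip_suml (bigD1 j) //= ipZl (ipC (et j)) frame_dual eqxx mulr1.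
  rewrite big1 ?addr0 ?subrr // => i /negbTE ij.
  by rewrite ipZl (ipC (et i)) frame_dual eq_sym ij mulr0.
rewrite (frame_expand y); apply: big1 => k _.
rewrite [X in ip y X](frame_expand (et k)) ip_sumr big1 ?scale0r // => j _.
by rewrite ipZr y_e mulr0.
Qed.

Lemma gamma_frame x s : \sum_i ip x (e i) *: gamma (et i) s = gamma x s.
Proof.
by rewrite {2}(dual_frame_expand x) gamma_suml; apply: eq_bigr => i _; rewrite gammaZl.
Qed.

Lemma cl3D (a b c : V -> V -> V -> K) s :
  (forall u v w, c u v w = a u v w + b u v w) ->
  cl3 gamma e et c s = cl3 gamma e et a s + cl3 gamma e et b s.
Proof.
move=> cE; rewrite /cl3 -scalerDr; congr (_ *: _).
rewrite -big_split; apply: eq_bigr => i _; rewrite -big_split; apply: eq_bigr => j _.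
by rewrite -big_split; apply: eq_bigr => k _; rewrite cE scalerDl.
Qed.

End CliffordFrame.

Section SkewEndomorphism.
Variables (R : realType) (K : comAlgType R) (V S : lmodType K).
Variables (ip : V -> V -> K) (gamma : V -> S -> S) (n : nat) (e et : 'I_n -> V).
Hypotheses (sp : scalar_product ip) (cm : clifford_module ip gamma)
  (fr : local_frame ip e et).

Definition skew_endomorphism (B : V -> V) : Prop :=
  [/\ forall u v, B (u + v) = B u + B v,
      forall (f : K) u, B (f *: u) = f *: B u &
      forall u w, ip (B u) w + ip u (B w) = 0].

Definition twice_cl2 (B : V -> V) (s : S) : S :=
  \sum_j gamma (et j) (gamma (B (e j)) s).

Lemma cl2E B s : cl2 gamma e et B s = coef_half *: twice_cl2 B s.
Proof. by []. Qed.

Variable B : V -> V.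
Hypothesis skB : skew_endomorphism B.

Lemma skew_sum (F : 'I_n -> V) : B (\sum_i F i) = \sum_i B (F i).
Proof.
case: skB => BD BZ _; have B0 : B 0 = 0 by have := BZ 0 0; rewrite !scale0r.
by apply: (big_morph B) => [x y|]; rewrite ?BD ?B0.
Qed.

Lemma ip_skew u w : ip (B u) w = - ip u (B w).
Proof. by case: skB => _ _ Bsk; apply/eqP; rewrite -subr_eq0 opprK Bsk. Qed.

Lemma trace_skew : \sum_j ip (B (e j)) (et j) = 0.
Proof.
case: skB => _ BZ _; set t := \sum_j _.
have tN : t = - t.
  transitivity (\sum_j \sum_k ip (e j) (e k) * ip (B (et k)) (et j)).
    apply: eq_bigr => j _.
    rewrite [X in B X](dual_frame_expand sp fr (e j)) skew_sum (ip_suml sp).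
    by apply: eq_bigr => k _; rewrite BZ (ipZl sp).
  rewrite exchange_big /= /t -sumrN; apply: eq_bigr => k _.
  transitivity (ip (B (et k)) (\sum_j ip (e k) (e j) *: et j)).
    by rewrite (ip_sumr sp); apply: eq_bigr => j _; rewrite (ipZr sp) (ipC sp).
  by rewrite -(dual_frame_expand sp fr) ip_skew (ipC sp).
have : t *+ 2 = 0 by rewrite mulr2n {1}tN addNr.
by move/(congr1 (fun z => coef_half * z)); rewrite -mulr_natr mulrCA coef_half2 mulr1 mulr0.
Qed.

Lemma gamma_skew_frame a s :
  \sum_j ip (B (e j)) a *: gamma (et j) s = - gamma (B a) s.
Proof.
rewrite -(gamma_frame sp cm fr) -sumrN; apply: eq_bigr => j _.
by rewrite -scaleNr ip_skew (ipC sp).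
Qed.

Lemma gamma_dual_frame a s :
  \sum_j ip a (et j) *: gamma (B (e j)) s = gamma (B a) s.
Proof.
rewrite {2}(frame_expand sp fr a) skew_sum (gamma_suml cm); apply: eq_bigr => j _.
by case: skB => _ BZ _; rewrite BZ (gammaZl cm).
Qed.

Lemma twice_cl2_gamma a s :
  twice_cl2 B (gamma a s) = gamma a (twice_cl2 B s) - 4%:R *: gamma (B a) s.
Proof.
transitivity (\sum_j (gamma a (gamma (et j) (gamma (B (e j)) s))
   - 2%:R *: (ip a (et j) *: gamma (B (e j)) s - ip (B (e j)) a *: gamma (et j) s))).
  by apply: eq_bigr => j _; rewrite (gamma_pass2 sp cm a) (ipC sp a (B (e j))) addrK.
rewrite sumrB -(gamma_sumr cm) -scaler_sumr sumrB gamma_dual_frame gamma_skew_frame.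
by rewrite opprK -mulr2n -scalerMnr scalerMnl -mulrnA.
Qed.

End SkewEndomorphism.

Section ConnectionShift.
Variables (R : realType) (K : comAlgType R) (V S : lmodType K).
Variables (ip : V -> V -> K) (gamma : V -> S -> S) (n : nat) (e et : 'I_n -> V).
Variable A : V -> V -> V.
Hypotheses (sp : scalar_product ip) (cm : clifford_module ip gamma)
  (fr : local_frame ip e et) (soA : so_valued ip A).

Lemma so_valued_skew u : skew_endomorphism ip (A u).
Proof. by case: soA. Qed.

Lemma torsion_shift (br D : V -> V -> V) u v w :
  torsion br ip (fun x y => D x y + A x y) u v w
  = torsion br ip D u v w + alphaA ip A u v w.
Proof.
rewrite /torsion /alphaA !(ipDl sp, ipNl sp, ipDr sp).
rewrite (ip_skew (so_valued_skew v) u w) (ipC sp v (A w u)) (ipC sp u (A v w)).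
ring.
Qed.

Lemma compatible_shift (D : V -> V -> V) (DS : V -> S -> S) :
  compatible gamma D DS ->
  compatible gamma (fun u v => D u v + A u v)
    (fun u t => DS u t - coef_half *: cl2 gamma e et (A u) t).
Proof.
move=> compD u a s; rewrite !cl2E (twice_cl2_gamma sp cm fr (so_valued_skew u)).
rewrite compD (gammaDl cm) (gammaBr cm) !(gammaZr cm) !scalerBr !scalerA.
by rewrite -coef_quarterE coef_quarter4 scale1r opprB addrACA.
Qed.

Lemma cl3_alpha_term1 s :
  cl3 gamma e et (fun u v w => ip (A u v) w) s
  = coef_sixth *: \sum_i gamma (et i) (twice_cl2 gamma e et (A (e i)) s).
Proof.
congr (_ *: _); apply: eq_bigr => i _; rewrite (gamma_sumr cm); apply: eq_bigr => j _.
rewrite -(gamma_frame sp cm fr (A (e i) (e j))) !(gamma_sumr cm); apply: eq_bigr => k _.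
by rewrite !(gammaZr cm).
Qed.

Lemma cl3_alpha_term2 s :
  cl3 gamma e et (fun u v w => ip (A v w) u) s
  = coef_sixth *: (\sum_i gamma (et i) (twice_cl2 gamma e et (A (e i)) s)
                   - 2%:R *: gamma (traceA e et A) s).
Proof.
congr (_ *: _).
transitivity (\sum_j (gamma (et j) (twice_cl2 gamma e et (A (e j)) s)
                      - 2%:R *: gamma (A (e j) (et j)) s)); last first.
  by rewrite sumrB -scaler_sumr -(gamma_suml cm).
rewrite exchange_big /=; apply: eq_bigr => j _; rewrite exchange_big /=.
transitivity (\sum_k gamma (A (e j) (e k)) (gamma (et j) (gamma (et k) s))).
  by apply: eq_bigr => k _; rewrite (gamma_frame sp cm fr).
under eq_bigr do rewrite (gamma_pass2 sp cm).
rewrite big_split /= -(gamma_sumr cm) -scaler_sumr sumrB -scaler_suml.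
rewrite (trace_skew sp fr (so_valued_skew _)) scale0r subr0.
by rewrite (gamma_skew_frame sp cm fr (so_valued_skew _)) scalerN.
Qed.

Lemma cl3_alpha_term3 s :
  cl3 gamma e et (fun u v w => ip (A w u) v) s
  = coef_sixth *: (\sum_i gamma (et i) (twice_cl2 gamma e et (A (e i)) s)
                   - 4%:R *: gamma (traceA e et A) s).
Proof.
congr (_ *: _).
transitivity (\sum_k twice_cl2 gamma e et (A (e k)) (gamma (et k) s)).
  transitivity (\sum_i \sum_k gamma (et i) (gamma (A (e k) (e i)) (gamma (et k) s))).
    apply: eq_bigr => i _; rewrite exchange_big; apply: eq_bigr => k _ /=.
    rewrite -(gamma_frame sp cm fr (A (e k) (e i))) (gamma_sumr cm).
    by apply: eq_bigr => j _; rewrite (gammaZr cm).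
  by rewrite exchange_big.
under eq_bigr do rewrite (twice_cl2_gamma sp cm fr (so_valued_skew _)).
by rewrite sumrB -scaler_sumr -(gamma_suml cm).
Qed.

Lemma cl3_alphaA s :
  cl3 gamma e et (alphaA ip A) s
  = coef_half *: \sum_i gamma (et i) (twice_cl2 gamma e et (A (e i)) s)
    - gamma (traceA e et A) s.
Proof.
rewrite (cl3D gamma e et (a := fun u v w => ip (A u v) w + ip (A v w) u)
              (b := fun u v w => ip (A w u) v)) //.
rewrite (cl3D gamma e et (a := fun u v w => ip (A u v) w) (b := fun u v w => ip (A v w) u)) //.
rewrite cl3_alpha_term1 cl3_alpha_term2 cl3_alpha_term3 -!scalerDr.
set Q := \sum_i _; set g := gamma _ s.
have -> : Q + (Q - 2%:R *: g) + (Q - 4%:R *: g) = 3%:R *: Q - 6%:R *: g.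
  rewrite !scaler_nat !addrA (addrAC (Q + Q)) -addrA -opprD -mulrnDr.
  by rewrite -mulr2n -mulrSr.
by rewrite scalerBr !scalerA coef_sixth3 coef_sixth6 scale1r.
Qed.

Lemma dirac_shift (DS : V -> S -> S) s :
  dirac gamma e et (fun u t => DS u t - coef_half *: cl2 gamma e et (A u) t) s
  = dirac gamma e et DS s - coef_quarter *: cl3 gamma e et (alphaA ip A) s
    - coef_quarter *: gamma (traceA e et A) s.
Proof.
rewrite -addrA -opprD -scalerDr cl3_alphaA subrK /dirac scalerA mulrC -scalerA -scalerBr.
congr (_ *: _); rewrite scaler_sumr -sumrB; apply: eq_bigr => i _.
by rewrite cl2E (gammaBr cm) !(gammaZr cm) !scalerA -coef_quarterE.
Qed.

End ConnectionShift.

Unset Implicit Arguments.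

Theorem proposition8p1 (R : realType) (K : comAlgType R) (V S : lmodType K)
  (pi : V -> K -> K) (br : V -> V -> V) (ip : V -> V -> K)
  (gamma : V -> S -> S) (n : nat) (e et : 'I_n -> V)
  (D A : V -> V -> V) (DS : V -> S -> S) :
  courant_algebroid pi br ip ->
  clifford_module ip gamma ->
  local_frame ip e et ->
  gen_connection pi ip D ->
  so_valued ip A ->
  E_connection pi DS ->
  compatible gamma D DS ->
  let D' := fun u v => D u v + A u v in
  let DS' := fun u s => DS u s - coef_half *: cl2 gamma e et (A u) s in
  let alpha := alphaA ip A in
  let vA := traceA e et A in
  [/\ forall u v w, torsion br ip D' u v w = torsion br ip D u v w + alpha u v w,
      compatible gamma D' DS',
      forall s, dirac gamma e et DS' s
                = dirac gamma e et DS s - coef_quarter *: cl3 gamma e et alpha s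
                  - coef_quarter *: gamma vA s &
      forall s, dirac gamma e et DS' s + coef_quarter *: cl3 gamma e et (torsion br ip D') s
                = dirac gamma e et DS s + coef_quarter *: cl3 gamma e et (torsion br ip D) s
                  - coef_quarter *: gamma vA s].
Proof.
move=> [[_ sp _ _ _] _] cm fr _ soA _ compD D' DS' alpha vA.
have torsion_D' u v w : torsion br ip D' u v w = torsion br ip D u v w + alpha u v w.
  exact: (torsion_shift sp soA).
split=> // [|s|s]; first exact: (compatible_shift sp cm fr soA).
  exact: (dirac_shift sp cm fr soA).
rewrite (dirac_shift sp cm fr soA) (cl3D gamma e et s torsion_D') scalerDr.
by rewrite addrAC addrACA addNr addr0.
Qed.
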